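(* There is an absolute constant $C>0$ and a function $\delta(n)\to0$ such that for every directed graph $G$ on $n$ nodes and every $q\in(0,1)$ (possibly depending on $n$), the convergence time of the \textsc{Random Pick} process on $G$ started from a $q$-random state is at most $C(\ln n)^3/q^2$ with probability at least $1-\delta(n)$.
   Context: In a $q$-random state each node is independently colored (red or blue, arbitrarily) with probability $q$ and uncolored otherwise. \textsc{Random Pick} process: in each round $t=1,2,\dots$, every node $v$ with at least one out-neighbor picks an out-neighbor $ps_t(v)$ uniformly at random, independently of everything else; $\mathcal{S}_t(v)=\mathcal{S}_{t-1}(ps_t(v))$ if $\mathcal{S}_{t-1}(v)=u$ (uncolored) and $\mathcal{S}_{t-1}(ps_t(v))$ is colored, else $\mathcal{S}_t(v)=\mathcal{S}_{t-1}(v)$. A state is stable if no uncolored node has a colored out-neighbor; the convergence time is the smallest $t\ge0$ with $\mathcal{S}_t$ stable. *)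

From HB Require Import structures.
From mathcomp Require Import all_boot all_order all_algebra.
From mathcomp Require Import all_classical all_reals all_analysis.
Set Implicit Arguments. Unset Strict Implicit. Unset Printing Implicit Defensive.
Import Order.TTheory GRing.Theory Num.Theory.
Local Open Scope ring_scope.

(* A state assigns to each node None (uncolored) or Some c (c = true: red,
   c = false: blue). A directed graph on n nodes is a relation e on 'I_n:
   e v w means there is an arc v -> w (w is an out-neighbor of v). *)
Definition state (n : nat) := 'I_n -> option bool.

Definition outdeg (n : nat) (e : rel 'I_n) (v : 'I_n) : nat := #|[set w | e v w]|.

Definition stableb (n : nat) (e : rel 'I_n) (S : state n) : bool :=
  [forall v, forall w, e v w ==> (S v == None) ==> (S w == None)].

Definition step (n : nat) (S : state n) (p : 'I_n -> 'I_n) : state n :=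
  fun v => match S v, S (p v) with
           | None, Some c => Some c
           | _, _ => S v
           end.

(* S_t, where round t (t >= 1) uses the picks ps (t-1). *)
Fixpoint run (n : nat) (S0 : state n) (ps : nat -> 'I_n -> 'I_n) (t : nat)
  : state n :=
  match t with
  | 0 => S0
  | t'.+1 => step (run S0 ps t') (ps t')
  end.

(* Probability of a pick function for one round: every node with at least one
   out-neighbor picks one uniformly at random, independently; nodes without
   out-neighbors pick nothing (encoded as the dummy value p v = v, prob. 1). *)
Definition pick_weight (R : realType) (n : nat) (e : rel 'I_n)
    (p : {ffun 'I_n -> 'I_n}) : R :=
  \prod_(v : 'I_n)
     (if outdeg e v == 0%N then (p v == v)%:R
      else (e v (p v))%:R / (outdeg e v)%:R).

(* Initial q-random state: colored set A (each node independently with prob.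
   q), colors on A chosen arbitrarily (possibly depending on A) by col. *)
Definition init_state (n : nat) (col : {set 'I_n} -> 'I_n -> bool)
    (A : {set 'I_n}) : state n :=
  fun v => if v \in A then Some (col A v) else None.

Definition set_weight (R : realType) (n : nat) (q : R) (A : {set 'I_n}) : R :=
  q ^+ #|A| * (1 - q) ^+ (n - #|A|).

(* Probability that the convergence time is at most the real bound b,
   computed by marginalizing over the first K rounds (K with b <= K):
   the event {tau <= b} = {exists t <= b, S_t stable} only depends on
   the initial state and on the picks of rounds 1..K. *)
Definition prob_conv_le (R : realType) (n : nat) (e : rel 'I_n) (q : R)
    (col : {set 'I_n} -> 'I_n -> bool) (K : nat) (b : R) : R :=
  \sum_(A : {set 'I_n}) set_weight q A *
    \sum_(ps : {ffun 'I_K -> {ffun 'I_n -> 'I_n}})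
       (\prod_(i < K) pick_weight R e (ps i)) *
       ([exists t : 'I_K.+1,
           ((t%:R : R) <= b) &&
           stableb e (run (init_state col A)
                        (fun s => if insub s is Some i then (ps i : 'I_n -> 'I_n)
                                  else id) t)])%:R.

From mathcomp Require Import all_boot all_order all_algebra.
From mathcomp Require Import all_classical all_reals all_analysis.
From mathcomp Require Import ring lra zify.
Import Order.TTheory GRing.Theory Num.Theory.
Set Implicit Arguments. Unset Strict Implicit. Unset Printing Implicit Defensive.
Local Open Scope ring_scope.

(* Take a = floor(3 ln n) + 1 and D0 ~ a / q.  With probability 1 - O(1/n) the
   initially colored set A is good: every node with at least D0 out-neighbours
   has at least outdeg/D0 colored ones, and every node reaches A within D0 steps
   unless its out-ball of radius D0 has at most D0 nodes, in which case the ball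
   is saturated and A is not reachable at all.  Cut time into D0 phases of
   W = 2 D0 a rounds.  In phase j a node at distance j + 1 from A has a target
   set of out-neighbours, of density at least 1/(2 D0), that are all colored
   by the start of the phase; it misses the target W times in a row with
   probability at most (1 - 1/(2 D0))^W <= exp(-a) <= n^-3.  If no node misses,
   after D0 W = O(ln^3 n / q^2) rounds every node that can reach A is colored,
   which is exactly stability. *)

Lemma sum_set_prod (R : comRingType) (T : finType) (g : T -> bool -> R) :
  \sum_(A : {set T}) \prod_(v : T) g v (v \in A) = \prod_(v : T) (g v true + g v false).
Proof.
under [RHS]eq_bigr do rewrite -big_bool.
rewrite bigA_distr_bigA /= (reindex (fun f : {ffun T -> bool} => [set x | f x])) /=.
  by apply: eq_bigr => f _; apply: eq_bigr => v _; rewrite inE.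
apply: onW_bij; exists (fun A : {set T} => [ffun x => x \in A]) => [f|A].
  by apply/ffunP => x; rewrite ffunE inE.
by apply/setP => x; rewrite inE ffunE.
Qed.

Lemma indicator_le_sum (R : numDomainType) (I : finType) (b : bool) (c : I -> bool) :
  (b -> exists i, c i) -> (b%:R : R) <= \sum_i (c i)%:R.
Proof.
case: b => [/(_ isT) [i ci]|_]; last exact: sumr_ge0.
by rewrite (bigD1 i) //= ci lerDl sumr_ge0.
Qed.

Section SetWeight.
Variables (R : realType) (n : nat) (q : R).

Lemma set_weightE (A : {set 'I_n}) :
  set_weight q A = \prod_(v : 'I_n) (if v \in A then q else 1 - q).
Proof.
rewrite /set_weight (bigID (mem A)) /=.
rewrite (eq_bigr (fun _ => q)) ?prodr_const; last by move=> v ->.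
rewrite (eq_bigr (fun _ => 1 - q)) ?prodr_const; last by move=> v /negbTE ->.
congr (_ * _ ^+ _); have := cardC (mem A); rewrite card_ord => cardA.
apply: (@addnI #|A|); rewrite subnKC ?cardA //.
by rewrite -[X in (_ <= X)%N]card_ord max_card.
Qed.

Lemma sum_set_weight : \sum_(A : {set 'I_n}) set_weight q A = 1.
Proof.
under eq_bigr do rewrite set_weightE.
by rewrite (sum_set_prod (fun _ b => if b then q else 1 - q)) big1 // => v _; rewrite subrKC.
Qed.

Lemma set_weight_ge0 (A : {set 'I_n}) : 0 <= q <= 1 -> 0 <= set_weight q A.
Proof. by case/andP=> q0 q1; rewrite mulr_ge0 ?exprn_ge0 ?subr_ge0. Qed.

Lemma sum_set_weight_disjoint (S : {set 'I_n}) :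
  \sum_(A : {set 'I_n}) set_weight q A * [disjoint S & A]%:R = (1 - q) ^+ #|S|.
Proof.
pose g v (b : bool) := if b then (if v \in S then 0 else q) else 1 - q.
transitivity (\sum_(A : {set 'I_n}) \prod_(v : 'I_n) g v (v \in A)).
  apply: eq_bigr => A _; rewrite set_weightE.
  have [dSA|] := boolP [disjoint S & A].
    rewrite mulr1; apply: eq_bigr => v _; rewrite /g; case: ifP => // vA.
    by rewrite (disjointFl dSA vA).
  rewrite -setI_eq0 => /set0Pn[v]; rewrite inE => /andP[vS vA].
  rewrite mulr0 (bigD1 v) //= /g vA vS mul0r //.
rewrite sum_set_prod (bigID (mem S)) /= [X in _ * X]big1 ?mulr1; last first.
  by move=> v /negbTE vS; rewrite /g vS subrKC.
rewrite (eq_bigr (fun _ => 1 - q)) ?prodr_const; last by move=> v vS; rewrite /g vS add0r.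
by congr (_ ^+ _); apply: eq_card => v; rewrite inE.
Qed.

End SetWeight.

Section OutBall.
Variables (n : nat) (e : rel 'I_n).

Definition out_nbrs (u : 'I_n) : {set 'I_n} := [set w | e u w].

Definition expand (S : {set 'I_n}) : {set 'I_n} := S :|: [set w | [exists x in S, e x w]].

Definition out_ball (j : nat) (u : 'I_n) : {set 'I_n} := iter j expand [set u].

Definition reaches (A : {set 'I_n}) (j : nat) (u : 'I_n) : bool :=
  ~~ [disjoint out_ball j u & A].

Lemma expandS (S T : {set 'I_n}) : S \subset T -> expand S \subset expand T.
Proof.
move=> /fintype.subsetP ST; apply/fintype.subsetP => x.
rewrite !inE => /orP[/ST -> //|/existsP[y /andP[/ST yT eyx]]].
by apply/orP; right; apply/existsP; exists y; rewrite yT.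
Qed.

Lemma out_ball_mono u j k : (j <= k)%N -> out_ball j u \subset out_ball k u.
Proof.
move=> /subnK <-; elim: (k - j)%N => //= m IH.
by rewrite /out_ball ?addSn /=; apply: fintype.subset_trans IH (finset.subsetUl _ _).
Qed.

Lemma out_ball_center u j : u \in out_ball j u.
Proof. by apply: fintype.subsetP (out_ball_mono u (leq0n j)) _ _; rewrite inE. Qed.

Lemma out_ball_nbr u w j : e u w -> out_ball j w \subset out_ball j.+1 u.
Proof.
move=> euw; rewrite /out_ball iterSr; elim: j => /= [|j IH]; last exact: expandS.
apply/fintype.subsetP => x; rewrite !inE => /eqP ->.
by apply/orP; right; apply/existsP; exists u; rewrite inE eqxx.
Qed.

Lemma mem_out_ballS u j x : x \in out_ball j.+1 u ->
  x = u \/ exists2 w, e u w & x \in out_ball j w.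
Proof.
elim: j x => [|j IH] x.
  rewrite /out_ball /= !inE => /orP[/eqP ->|/existsP[y /andP[]]]; first by left.
  by rewrite inE => /eqP -> eux; right; exists x; rewrite ?inE.
rewrite {1}/out_ball iterS -/(out_ball j.+1 u) inE => /orP[/IH [->|[w euw xw]]|].
- by left.
- by right; exists w => //; apply: fintype.subsetP (out_ball_mono w (leqnSn j)) _ _.
- rewrite inE => /existsP[y /andP[/IH [->|[w euw yw]] eyx]].
    by right; exists x => //; apply: out_ball_center.
  right; exists w => //; rewrite /out_ball iterS -/(out_ball j w) !inE.
  by apply/orP; right; apply/existsP; exists y; rewrite yw.
Qed.

Lemma out_ball_fixed u j : out_ball j u = out_ball j.+1 u ->
  forall m, (j <= m)%N -> out_ball m u = out_ball j u.
Proof.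
move=> Ej m /subnK <-; elim: (m - j)%N => //= k IH.
by rewrite [out_ball _ _]/= -/(out_ball (k + j) u) IH [RHS]Ej.
Qed.

Lemma card_out_ball_gt u m :
  (forall j, (j < m)%N -> out_ball j u != out_ball j.+1 u) -> (m < #|out_ball m u|)%N.
Proof.
elim: m => [|m IH] grow; first by apply/card_gt0P; exists u; apply: out_ball_center.
apply: leq_ltn_trans (IH (fun j jm => grow j (ltnW jm))) _.
by apply: proper_card; rewrite finset.properEneq grow // out_ball_mono.
Qed.

(* A ball of radius L with at most L nodes stopped growing before radius L. *)
Lemma out_ball_saturated u L : (#|out_ball L u| <= L)%N ->
  forall m, out_ball m u \subset out_ball L u.
Proof.
move=> cardL.
have [j jL Ej] : exists2 j, (j < L)%N & out_ball j u = out_ball j.+1 u.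
  have /existsP[j /eqP Ej] : [exists j : 'I_L, out_ball j u == out_ball j.+1 u].
    move: cardL; apply: contraLR => /existsPn grow; rewrite -ltnNge.
    by apply: card_out_ball_gt => j jL; apply: grow (Ordinal jL).
  by exists j.
move=> m; have [mL|Lm] := leqP m L; first exact: out_ball_mono.
by rewrite (out_ball_fixed Ej (ltnW (ltn_trans jL Lm))) out_ball_mono // ltnW.
Qed.

Lemma reachesP (A : {set 'I_n}) j u :
  reflect (exists2 x, x \in out_ball j u & x \in A) (reaches A j u).
Proof.
rewrite /reaches -setI_eq0; apply: (iffP (finset.set0Pn _)) => [[x]|[x xB xA]].
  by rewrite inE => /andP[xB xA]; exists x.
by exists x; rewrite inE xB xA.
Qed.

Lemma reaches_mono (A : {set 'I_n}) j k u : (j <= k)%N -> reaches A j u -> reaches A k u.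
Proof.
move=> jk /reachesP[x xB xA]; apply/reachesP; exists x => //.
exact: fintype.subsetP (out_ball_mono u jk) _ xB.
Qed.

Lemma reaches0 (A : {set 'I_n}) u : reaches A 0 u = (u \in A).
Proof.
apply/reachesP/idP => [[x]|uA]; first by rewrite inE => /eqP ->.
by exists u; rewrite ?inE.
Qed.

Lemma reaches_nbr (A : {set 'I_n}) j u w : e u w -> reaches A j w -> reaches A j.+1 u.
Proof.
move=> euw /reachesP[x xB xA]; apply/reachesP; exists x => //.
exact: fintype.subsetP (out_ball_nbr j euw) _ xB.
Qed.

Lemma reachesS_nbr (A : {set 'I_n}) j u : reaches A j.+1 u -> ~~ reaches A j u ->
  exists2 w, e u w & reaches A j w.
Proof.
move=> /reachesP[x /mem_out_ballS[->|[w euw xB]] xA] nreach.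
  by move: nreach; rewrite (reaches_mono (leq0n j)) // reaches0.
by exists w => //; apply/reachesP; exists x.
Qed.

End OutBall.

Section Process.
Variables (n : nat) (e : rel 'I_n).

Definition colored (S : state n) v := S v != None.

Lemma colored_step (S : state n) p v : colored S v -> colored (step S p) v.
Proof. by rewrite /colored /step; case: (S v). Qed.

Lemma colored_step_pick (S : state n) p v : colored S (p v) -> colored (step S p) v.
Proof. by rewrite /colored /step; case: (S v) => //; case: (S (p v)). Qed.

Lemma colored_run_mono (S0 : state n) f t t' v : (t <= t')%N ->
  colored (run S0 f t) v -> colored (run S0 f t') v.
Proof.
move=> /subnK <-; elim: (t' - t)%N => //= k IH c.
by rewrite ?addSn /=; apply: colored_step; apply: IH.
Qed.

(* Nodes without out-neighbours pick themselves, as in [pick_weight]. *)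
Definition valid_picks (f : nat -> 'I_n -> 'I_n) := forall t v, f t v = v \/ e v (f t v).

Lemma colored_run_reaches col A f t v : valid_picks f ->
  colored (run (init_state col A) f t) v -> reaches e A t v.
Proof.
move=> fP; elim: t v => [|t IH] v.
  by rewrite /colored /= /init_state reaches0; case: (v \in A).
rewrite /colored /= /step.
case Sv: (run _ f t v) => [c|] => [_|].
  by apply: reaches_mono (leqnSn t) _; apply: IH; rewrite /colored Sv.
case Sfv: (run _ f t (f t v)) => [c|] // _.
case: (fP t v) => [fv|evf]; first by move: Sfv; rewrite fv Sv.
by apply: reaches_nbr evf _; apply: IH; rewrite /colored Sfv.
Qed.

Definition window (W j s : nat) := (j * W <= s < j.+1 * W)%N.

(* Phase j consists of the rounds in [window W j]; a node at distance j.+1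
   from the initially colored set gets colored in phase j as soon as it picks
   a node at distance at most j, which is colored by the end of phase j - 1. *)
Lemma colored_run_phases col A f L W :
  (forall u j, (j < L)%N -> ~~ reaches e A j u -> reaches e A j.+1 u ->
     exists2 s, window W j s & reaches e A j (f s u)) ->
  forall j u, (j <= L)%N -> reaches e A j u -> colored (run (init_state col A) f (j * W)) u.
Proof.
move=> hitP; elim=> [|j IH] u jL; first by rewrite reaches0 /colored /= /init_state => ->.
have [reach_j|nreach_j] := boolP (reaches e A j u) => [_|reach_j1].
  by apply: colored_run_mono (leq_mul (leqnSn j) (leqnn W)) _; apply: IH => //; apply: ltnW.
have [s /andP[js sj] hit_s] := hitP u j jL nreach_j reach_j1.
apply: colored_run_mono sj _; apply: colored_step_pick.
by apply: colored_run_mono js _; apply: IH => //; apply: ltnW.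
Qed.

Lemma stableb_run_phases col A f L W : valid_picks f ->
  (forall u, reaches e A L u || (#|out_ball e L u| <= L)%N) ->
  (forall u j, (j < L)%N -> ~~ reaches e A j u -> reaches e A j.+1 u ->
     exists2 s, window W j s & reaches e A j (f s u)) ->
  stableb e (run (init_state col A) f (L * W)).
Proof.
move=> fP ballP hitP.
apply/forallP => v; apply/forallP => w; apply/implyP => evw; apply/implyP => /eqP Sv.
apply/negPn/negP => colored_w.
have reach_v := reaches_nbr evw (colored_run_reaches fP colored_w).
have reach_vL : reaches e A L v.
  case/orP: (ballP v) => // cardL.
  move: reach_v => /reachesP[x xB xA]; apply/reachesP; exists x => //.
  exact: fintype.subsetP (out_ball_saturated cardL _) _ xB.
by move: (colored_run_phases col hitP (leqnn L) reach_vL); rewrite /colored Sv.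
Qed.

End Process.

Section PickWeight.
Variables (R : realType) (n : nat) (e : rel 'I_n).

Definition pick_prob (v w : 'I_n) : R :=
  if outdeg e v == 0%N then (w == v)%:R else (e v w)%:R / (outdeg e v)%:R.

Definition rounds_weight (K : nat) (ps : {ffun 'I_K -> {ffun 'I_n -> 'I_n}}) : R :=
  \prod_(i < K) pick_weight R e (ps i).

Lemma pick_weightE p : pick_weight R e p = \prod_v pick_prob v (p v).
Proof. by []. Qed.

Lemma pick_prob_ge0 v w : 0 <= pick_prob v w.
Proof. by rewrite /pick_prob; case: ifP => _ //; rewrite divr_ge0. Qed.

Lemma pick_weight_ge0 p : 0 <= pick_weight R e p.
Proof. by apply: prodr_ge0 => v _; apply: pick_prob_ge0. Qed.

Lemma rounds_weight_ge0 K (ps : {ffun 'I_K -> {ffun 'I_n -> 'I_n}}) :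
  0 <= rounds_weight ps.
Proof. by apply: prodr_ge0 => i _; apply: pick_weight_ge0. Qed.

Lemma sum_pick_prob_mem u (X : {set 'I_n}) : outdeg e u != 0%N ->
  \sum_w pick_prob u w * (w \in X)%:R = #|out_nbrs e u :&: X|%:R / (outdeg e u)%:R.
Proof.
move=> /negbTE d0; rewrite mulr_natl -sumr_const [RHS]big_mkcond /=.
apply: eq_bigr => w _; rewrite /pick_prob d0 !inE.
by case: (e u w); case: (w \in X); rewrite ?mulr1 ?mulr0 ?mul0r ?mul1r.
Qed.

Lemma sum_pick_prob u : \sum_w pick_prob u w = 1.
Proof.
have [d0|d0] := eqVneq (outdeg e u) 0%N.
  rewrite /pick_prob d0 (bigD1 u) //= eqxx big1 ?addr0 // => w /negbTE -> //.
transitivity (\sum_w pick_prob u w * (w \in [set: 'I_n])%:R).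
  by apply: eq_bigr => w _; rewrite finset.in_setT mulr1.
by rewrite sum_pick_prob_mem // finset.setIT divff // pnatr_eq0.
Qed.

Lemma sum_pick_weight : \sum_(p : {ffun 'I_n -> 'I_n}) pick_weight R e p = 1.
Proof.
under eq_bigr do rewrite pick_weightE.
by rewrite -(bigA_distr_bigA pick_prob) big1 // => v _; apply: sum_pick_prob.
Qed.

Lemma sum_pick_weight_marginal u (h : 'I_n -> R) :
  \sum_(p : {ffun 'I_n -> 'I_n}) pick_weight R e p * h (p u) =
  \sum_w pick_prob u w * h w.
Proof.
pose F v w := pick_prob v w * (if v == u then h w else 1).
transitivity (\sum_(p : {ffun 'I_n -> 'I_n}) \prod_v F v (p v)).
  apply: eq_bigr => p _; rewrite big_split /=; congr (_ * _).
  by rewrite (bigD1 u) //= eqxx big1 ?mulr1 // => v /negbTE ->.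
rewrite -(bigA_distr_bigA F) (bigD1 u) //= [X in _ * X]big1 ?mulr1.
  by apply: eq_bigr => w _; rewrite /F eqxx.
by move=> v /negbTE vu; under eq_bigr do rewrite /F vu mulr1; apply: sum_pick_prob.
Qed.

Lemma sum_rounds_weight_prod K (H : 'I_K -> {ffun 'I_n -> 'I_n} -> R) :
  \sum_(ps : {ffun 'I_K -> {ffun 'I_n -> 'I_n}})
     rounds_weight ps * \prod_(i < K) H i (ps i) =
  \prod_(i < K) \sum_(p : {ffun 'I_n -> 'I_n}) pick_weight R e p * H i p.
Proof. by rewrite bigA_distr_bigA; apply: eq_bigr => ps _; rewrite -big_split. Qed.

Lemma sum_rounds_weight K :
  \sum_(ps : {ffun 'I_K -> {ffun 'I_n -> 'I_n}}) rounds_weight ps = 1.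
Proof.
rewrite -(bigA_distr_bigA (fun (_ : 'I_K) p => pick_weight R e p)) big1 // => i _.
exact: sum_pick_weight.
Qed.

Lemma pick_weight_neq0 p v : pick_weight R e p != 0 -> p v = v \/ e v (p v).
Proof.
rewrite pick_weightE prodf_seq_neq0 => /allP /(_ v (mem_index_enum _)) /=.
rewrite /pick_prob; case: ifP => _; first by rewrite pnatr_eq0 eqb0 negbK => /eqP; left.
by case: (e v (p v)) => [_|]; [right|rewrite mul0r eqxx].
Qed.

End PickWeight.

Section GoodInit.
Variables (n : nat) (e : rel 'I_n) (D0 : nat).

Definition block (u : 'I_n) (i : nat) : {set 'I_n} :=
  [set x in out_nbrs e u | (index x (enum (out_nbrs e u)) %/ D0 == i)%N].

Definition good_degree (A : {set 'I_n}) u :=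
  (outdeg e u < D0)%N || (outdeg e u %/ D0 <= #|out_nbrs e u :&: A|)%N.

Definition good_ball (A : {set 'I_n}) u :=
  reaches e A D0 u || (#|out_ball e D0 u| <= D0)%N.

Definition good_init (A : {set 'I_n}) := [forall u, good_degree A u && good_ball A u].

Hypothesis D0_gt0 : (0 < D0)%N.

Lemma card_block u i : (i < outdeg e u %/ D0)%N -> (D0 <= #|block u i|)%N.
Proof.
move=> i_lt; set s := enum (out_nbrs e u).
have s_uniq : uniq s by apply: enum_uniq.
have lt_size (k : 'I_D0) : (i * D0 + k < size s)%N.
  rewrite -cardE; apply: leq_trans (_ : i.+1 * D0 <= _)%N; first by rewrite mulSnr ltn_add2l.
  by apply: leq_trans (leq_trunc_div (outdeg e u) D0); rewrite leq_mul2r i_lt orbT.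
pose g (k : 'I_D0) := nth u s (i * D0 + k).
have g_inj : injective g.
  move=> k1 k2 /eqP; rewrite /g nth_uniq // eqn_add2l => /eqP k12.
  exact: val_inj.
rewrite -[X in (X <= _)%N](card_ord D0) -(card_imset _ g_inj).
apply: subset_leq_card; apply/fintype.subsetP => x /imsetP[k _ ->].
rewrite inE -(mem_enum (mem (out_nbrs e u))) -/s /g mem_nth //=.
by rewrite index_uniq // divnMDl // divn_small ?addn0.
Qed.

Lemma good_degree_blocks u (A : {set 'I_n}) :
  (forall i, (i < outdeg e u %/ D0)%N -> ~~ [disjoint block u i & A]) ->
  good_degree A u.
Proof.
move=> meet; apply/orP; right; set r := (outdeg e u %/ D0)%N.
pose f (i : 'I_r) := odflt u [pick x in block u i :&: A].
have fP (i : 'I_r) : f i \in block u i :&: A.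
  rewrite /f; case: pickP => [x //|/= none].
  have := meet i (ltn_ord i); rewrite -setI_eq0 => /finset.set0Pn[x xi].
  by move: (none x); rewrite xi.
have f_inj : injective f.
  move=> i1 i2 f12; apply: val_inj => /=.
  move: (fP i1) (fP i2); rewrite f12 !inE.
  by move=> /andP[/andP[_ /eqP <-] _] /andP[/andP[_ /eqP ->] _].
rewrite -[X in (X <= _)%N](card_ord r) -(card_imset _ f_inj).
apply: subset_leq_card; apply/fintype.subsetP => x /imsetP[i _ ->].
by move: (fP i); rewrite !inE => /andP[/andP[-> _] ->].
Qed.

End GoodInit.

Section GoodInitProb.
Variables (R : realType) (n : nat) (e : rel 'I_n) (q : R) (D0 : nat).
Hypotheses (q01 : 0 <= q <= 1) (D0_gt0 : (0 < D0)%N).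

Let q1_ge0 : 0 <= 1 - q. Proof. by rewrite subr_ge0; case/andP: q01. Qed.

Let expr1B_le (k : nat) : (D0 <= k)%N -> (1 - q) ^+ k <= (1 - q) ^+ D0.
Proof. by move=> D0k; rewrite ler_wiXn2l // lerBlDr lerDl; case/andP: q01. Qed.

(* Each of the outdeg/D0 full blocks is initially uncolored with probability
   at most (1 - q)^D0. *)
Lemma prob_not_good_degree u :
  \sum_(A : {set 'I_n}) set_weight q A * (~~ good_degree e D0 A u)%:R
    <= n%:R * (1 - q) ^+ D0.
Proof.
set r := (outdeg e u %/ D0)%N.
apply: (@le_trans _ _ (\sum_(A : {set 'I_n}) set_weight q A *
    \sum_(i < r) [disjoint block e D0 u i & A]%:R)).
  apply: ler_sum => A _; apply: ler_wpM2l; first exact: set_weight_ge0.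
  apply: indicator_le_sum => bad; apply/existsP; move: bad; apply: contraLR.
  move=> /existsPn blocks_meet; rewrite negbK; apply: good_degree_blocks => // i ir.
  exact: blocks_meet (Ordinal ir).
under eq_bigr do rewrite mulr_sumr.
rewrite exchange_big /=; under eq_bigr do rewrite sum_set_weight_disjoint.
apply: (@le_trans _ _ (\sum_(i < r) (1 - q) ^+ D0)).
  by apply: ler_sum => i _; apply/expr1B_le/card_block.
rewrite sumr_const card_ord -[X in X <= _]mulr_natl ler_wpM2r ?exprn_ge0 // ler_nat.
apply: leq_trans (leq_div _ _) _.
by rewrite -[X in (_ <= X)%N]card_ord max_card.
Qed.

Lemma prob_not_good_ball u :
  \sum_(A : {set 'I_n}) set_weight q A * (~~ good_ball e D0 A u)%:R <= (1 - q) ^+ D0.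
Proof.
set B := out_ball e D0 u.
apply: (@le_trans _ _ (\sum_(A : {set 'I_n}) set_weight q A *
    ((D0 < #|B|)%N%:R * [disjoint B & A]%:R))).
  apply: ler_sum => A _; apply: ler_wpM2l; first exact: set_weight_ge0.
  rewrite /good_ball negb_or -ltnNge /reaches negbK -/B.
  by case: (D0 < #|B|)%N; case: [disjoint B & A]; rewrite /= ?mul1r ?mul0r.
under eq_bigr do rewrite mulrCA.
rewrite -mulr_sumr sum_set_weight_disjoint.
case: ltnP => [D0B|]; last by rewrite mul0r exprn_ge0.
by rewrite mul1r expr1B_le // ltnW.
Qed.

Lemma prob_not_good_init :
  \sum_(A : {set 'I_n}) set_weight q A * (~~ good_init e D0 A)%:R
    <= n%:R * (n.+1%:R * (1 - q) ^+ D0).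
Proof.
apply: (@le_trans _ _ (\sum_(A : {set 'I_n}) set_weight q A *
    \sum_u ((~~ good_degree e D0 A u)%:R + (~~ good_ball e D0 A u)%:R))).
  apply: ler_sum => A _; apply: ler_wpM2l; first exact: set_weight_ge0.
  apply: (@le_trans _ _ (\sum_u (~~ good_degree e D0 A u || ~~ good_ball e D0 A u)%:R)).
    by apply: indicator_le_sum => /forallPn[u]; rewrite negb_and; exists u.
  by apply: ler_sum => u _; case: (~~ _); case: (~~ _); rewrite ?ler01 ?lerDl ?lerDr.
under eq_bigr do rewrite mulr_sumr.
rewrite exchange_big /=.
apply: (@le_trans _ _ (\sum_(u : 'I_n) (n.+1%:R * (1 - q) ^+ D0))); last first.
  by rewrite sumr_const card_ord [X in _ <= X]mulr_natl.
apply: ler_sum => u _.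
under eq_bigr do rewrite mulrDr.
rewrite big_split /= -natr1 mulrDl mul1r.
by apply: lerD; [exact: prob_not_good_degree | exact: prob_not_good_ball].
Qed.

End GoodInitProb.

Lemma prod_window (R : comRingType) (K W j : nat) (c : R) : (j.+1 * W <= K)%N ->
  \prod_(s < K) (if window W j s then c else 1) = c ^+ W.
Proof.
move=> jWK; rewrite -(big_mkord xpredT (fun s => if window W j s then c else 1)).
have jWK' : (j * W + W <= K)%N by rewrite -mulSnr.
rewrite (@big_cat_nat _ _ _ (j * W) 0 K) //=; last exact: leq_trans (leq_addr W _) jWK'.
rewrite (@big_cat_nat _ _ _ (j * W + W) (j * W) K) ?leq_addr //= big1_seq ?mul1r; last first.
  by move=> s /andP[_]; rewrite mem_index_iota /window => /andP[_ sj]; rewrite leqNgt sj.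
rewrite [X in _ * X]big1_seq ?mulr1; last first.
  move=> s /andP[_]; rewrite mem_index_iota /window mulSnr addnC => /andP[js _].
  by rewrite ltnNge js andbF.
rewrite big_seq_cond (eq_bigr (fun _ => c)) -?big_seq_cond ?prodr_const_nat ?addKn //.
by move=> s /andP[]; rewrite mem_index_iota /window mulSnr => ->.
Qed.

Lemma sum_first_true_le1 (R : numDomainType) (b : nat -> bool) (m : nat) :
  (forall j, b j -> b j.+1) -> \sum_(j < m) ((~~ b j && b j.+1)%:R : R) <= 1.
Proof.
move=> bS; have first_diff j : ((~~ b j && b j.+1)%:R : R) = (b j.+1)%:R - (b j)%:R.
  by case: (boolP (b j)) => [bj|]; rewrite ?(bS _ bj) ?subrr ?subr0.
under eq_bigr do rewrite first_diff.
rewrite -(big_mkord xpredT (fun j => ((b j.+1)%:R : R) - (b j)%:R)) telescope_sumr //.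
rewrite lerBlDr; case: (b m); case: (b 0) => /=; rewrite ?addr0 ?add0r ?lerDl ?ler01 ?ler0n // addr_ge0 //.
Qed.

Lemma expr1B_ratio_le (R : realFieldType) (m d k W : nat) :
  (0 < d)%N -> (d <= k * m)%N -> (m <= d)%N ->
  (1 - (m%:R / d%:R : R)) ^+ W <= (1 - k%:R^-1) ^+ W.
Proof.
move=> d_gt0 dkm md; have k_gt0 : (0 < k)%N.
  by rewrite lt0n; apply: contraTneq dkm => ->; rewrite mul0n -ltnNge.
apply: lerXn2r; rewrite ?nnegrE ?subr_ge0 ?ler_pdivrMr ?mul1r ?ler_nat ?ltr0n //.
  by rewrite invf_le1 ?ler1n ?ltr0n.
rewrite lerD2l lerN2 ler_pdivlMr ?ltr0n // mulrC ler_pdivrMr ?ltr0n //.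
by rewrite -natrM ler_nat mulnC.
Qed.

Section PhaseProb.
Variables (R : realType) (n : nat) (e : rel 'I_n) (D0 W K : nat).

Definition target (A : {set 'I_n}) (j : nat) (u : 'I_n) : {set 'I_n} :=
  if (outdeg e u < D0)%N then [set w | e u w && reaches e A j w]
  else [set w | e u w && (w \in A)].

Definition first_reach (A : {set 'I_n}) j u := ~~ reaches e A j u && reaches e A j.+1 u.

Definition misses_window (A : {set 'I_n}) (ps : {ffun 'I_K -> {ffun 'I_n -> 'I_n}}) j u :=
  [forall s : 'I_K, window W j s ==> (ps s u \notin target A j u)].

Definition phase_fails (A : {set 'I_n}) (ps : {ffun 'I_K -> {ffun 'I_n -> 'I_n}}) u :=
  [exists j : 'I_D0, first_reach A j u && misses_window A ps j u].

Lemma target_reaches A j u w : w \in target A j u -> reaches e A j w.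
Proof.
rewrite /target; case: ifP => _; rewrite inE => /andP[_] // wA.
by apply: reaches_mono (leq0n j) _; rewrite reaches0.
Qed.

Lemma card_target A j u : (0 < D0)%N -> good_init e D0 A ->
  ~~ reaches e A j u -> reaches e A j.+1 u ->
  (0 < outdeg e u)%N /\ (outdeg e u <= 2 * D0 * #|out_nbrs e u :&: target A j u|)%N.
Proof.
move=> D0_gt0 /forallP /(_ u) /andP[good_u _] nreach reach; rewrite /target.
case: ifP => [small|/negbT]; set c := #|_|.
  have [w euw reach_w] := reachesS_nbr reach nreach.
  have c_gt0 : (0 < c)%N by apply/card_gt0P; exists w; rewrite !inE euw reach_w.
  have d_gt0 : (0 < outdeg e u)%N by apply/card_gt0P; exists w; rewrite inE.
  have := leq_mul (leqnn (2 * D0)) c_gt0.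
  by split=> //; move: small; set d := outdeg e u; lia.
rewrite -leqNgt => large; move: good_u; rewrite /good_degree ltnNge large /=.
have -> : #|out_nbrs e u :&: A| = c.
  by apply: eq_card => w; rewrite !inE; case: (e u w).
move=> /(leq_mul (leqnn D0)); rewrite mulnC => rD0_le.
have := divn_eq (outdeg e u) D0; have := ltn_pmod (outdeg e u) D0_gt0.
have /(leq_mul (leqnn D0)) : (0 < outdeg e u %/ D0)%N by rewrite divn_gt0.
move: rD0_le; set d := outdeg e u; set r := (d %/ D0)%N; set m := (d %% D0)%N.
by split; [exact: leq_trans large | lia].
Qed.

Lemma prob_miss_window j u (X : {set 'I_n}) :
  (j.+1 * W <= K)%N -> outdeg e u != 0%N ->
  \sum_(ps : {ffun 'I_K -> {ffun 'I_n -> 'I_n}})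
     rounds_weight R e ps * [forall s : 'I_K, window W j s ==> (ps s u \notin X)]%:R =
  (1 - #|out_nbrs e u :&: X|%:R / (outdeg e u)%:R) ^+ W.
Proof.
move=> jWK d_neq0.
pose H (s : 'I_K) (p : {ffun 'I_n -> 'I_n}) : R :=
  if window W j s then (p u \notin X)%:R else 1.
transitivity (\sum_(ps : {ffun 'I_K -> {ffun 'I_n -> 'I_n}})
    rounds_weight R e ps * \prod_(s < K) H s (ps s)).
  apply: eq_bigr => ps _; congr (_ * _); rewrite /H.
  have [/forallP miss|/forallPn[s]] :=
    boolP [forall s : 'I_K, window W j s ==> (ps s u \notin X)].
    by rewrite big1 // => s _; move: (miss s); case: (window W j s) => //= ->.
  rewrite negb_imply => /andP[ws /negbTE hit]; apply/esym/eqP.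
  by rewrite prodf_seq_eq0; apply/hasP; exists s; rewrite ?mem_index_enum //= ws hit.
rewrite sum_rounds_weight_prod -(prod_window _ jWK); apply: eq_bigr => s _; rewrite /H.
case: (window W j s); last by under eq_bigr do rewrite mulr1; apply: sum_pick_weight.
rewrite (sum_pick_weight_marginal e u (fun w => ((w \notin X)%:R : R))).
have notin_indicator w : ((w \notin X)%:R : R) = 1 - (w \in X)%:R.
  by case: (w \in X); rewrite ?subrr ?subr0.
under eq_bigr do rewrite notin_indicator mulrBr mulr1.
by rewrite sumrB sum_pick_prob sum_pick_prob_mem.
Qed.

Lemma prob_phase_fails A u (eps : R) :
  (0 < D0)%N -> (D0 * W <= K)%N -> (1 - (2 * D0)%:R^-1) ^+ W <= eps ->
  \sum_(ps : {ffun 'I_K -> {ffun 'I_n -> 'I_n}})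
     rounds_weight R e ps * (good_init e D0 A && phase_fails A ps u)%:R <= eps.
Proof.
move=> D0_gt0 DWK small.
have eps_ge0 : 0 <= eps.
  by apply: le_trans small; rewrite exprn_ge0 // subr_ge0 invf_le1 ?ler1n ?ltr0n ?muln_gt0.
have [good|_] := boolP (good_init e D0 A); last by rewrite big1 // => ps _; rewrite mulr0.
apply: (@le_trans _ _ (\sum_(j < D0) (first_reach A j u)%:R * eps)); last first.
  rewrite -mulr_suml ler_piMl // /first_reach.
  apply: (@sum_first_true_le1 _ (fun j => reaches e A j u)) => j.
  exact: reaches_mono.
apply: (@le_trans _ _ (\sum_(ps : {ffun 'I_K -> {ffun 'I_n -> 'I_n}}) rounds_weight R e ps *
    \sum_(j < D0) (first_reach A j u)%:R * (misses_window A ps j u)%:R)).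
  apply: ler_sum => ps _; apply: ler_wpM2l; first exact: rounds_weight_ge0.
  apply: le_trans (_ : \sum_(j < D0) (first_reach A j u && misses_window A ps j u)%:R <= _).
    by apply: indicator_le_sum => /existsP.
  by apply: ler_sum => j _; rewrite -mulnb natrM.
under eq_bigr do rewrite mulr_sumr.
rewrite exchange_big; apply: ler_sum => j _.
have [first_j|_] := boolP (first_reach A j u); last first.
  by rewrite mul0r big1 // => ps _; rewrite mul0r mulr0.
under eq_bigr do rewrite mulrCA mul1r; rewrite mul1r.
have [d_gt0 d_le] := card_target D0_gt0 good (andP first_j).1 (andP first_j).2.
rewrite prob_miss_window -?lt0n //; last first.
  by apply: leq_trans DWK; rewrite leq_mul2r ltn_ord orbT.
apply: le_trans small; apply: expr1B_ratio_le d_le _ => //.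
exact/subset_leq_card/finset.subsetIl.
Qed.

End PhaseProb.

Section ConvergenceProb.
Variables (R : realType) (n : nat) (e : rel 'I_n) (K : nat).

Definition picks_of (ps : {ffun 'I_K -> {ffun 'I_n -> 'I_n}}) : nat -> 'I_n -> 'I_n :=
  fun s => if insub s is Some i then ps i : 'I_n -> 'I_n else id.

Definition stable_by col (A : {set 'I_n}) (ps : {ffun 'I_K -> {ffun 'I_n -> 'I_n}}) (b : R) :=
  [exists t : 'I_K.+1, ((t%:R : R) <= b) && stableb e (run (init_state col A) (picks_of ps) t)].

Lemma prob_conv_leE (q : R) col b : prob_conv_le e q col K b =
  \sum_(A : {set 'I_n}) set_weight q A *
    \sum_(ps : {ffun 'I_K -> {ffun 'I_n -> 'I_n}}) rounds_weight R e ps * (stable_by col A ps b)%:R.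
Proof. by []. Qed.

Lemma picks_ofE ps (s : 'I_K) : picks_of ps s = ps s.
Proof. by rewrite /picks_of valK. Qed.

Lemma valid_picks_of ps : rounds_weight R e ps != 0 -> valid_picks e (picks_of ps).
Proof.
rewrite prodf_seq_neq0 => /allP weight_neq0 t v; rewrite /picks_of.
case: insubP => [i _ _|_]; last by left.
exact/pick_weight_neq0/(weight_neq0 i (mem_index_enum _)).
Qed.

Lemma stable_by_phases col A D0 W ps (b : R) :
  (D0 * W <= K)%N -> (D0 * W)%:R <= b -> rounds_weight R e ps != 0 ->
  1 - (~~ good_init e D0 A)%:R - \sum_u (good_init e D0 A && phase_fails e D0 W A ps u)%:R
    <= ((stable_by col A ps b)%:R : R).
Proof.
move=> DWK DWb weight_neq0.
have [good|_] := boolP (good_init e D0 A) => /=; last first.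
  by rewrite big1_eq subrr subr0.
have [/existsP[u fails_u]|no_fail] := boolP [exists u, phase_fails e D0 W A ps u].
  rewrite subr0 (bigD1 u) //= fails_u opprD addrA subrr sub0r.
  by apply: le_trans (ler0n _ _); rewrite oppr_le0 sumr_ge0.
rewrite subr0 big1 ?subr0; last by move=> u _; move: no_fail => /existsPn /(_ u) /negbTE ->.
rewrite ler1n lt0b; apply/existsP; exists (@Ordinal K.+1 (D0 * W) DWK).
rewrite /= DWb; apply: stableb_run_phases => [|u|u j jD0 nreach reach].
- exact: valid_picks_of.
- by move: good => /forallP /(_ u) /andP[].
move: no_fail => /existsPn /(_ u) /existsPn /(_ (Ordinal jD0)).
rewrite /first_reach nreach reach /= => /forallPn[s]; rewrite negb_imply negbK.
by case/andP=> ws /target_reaches hit; exists s; rewrite ?picks_ofE.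
Qed.

Lemma prob_conv_le_ge (q : R) col D0 W (b eps : R) :
  0 <= q <= 1 -> (0 < D0)%N -> (D0 * W <= K)%N -> (D0 * W)%:R <= b ->
  (1 - q) ^+ D0 <= eps -> (1 - (2 * D0)%:R^-1) ^+ W <= eps ->
  1 - (n * n.+2)%:R * eps <= prob_conv_le e q col K b.
Proof.
move=> q01 D0_gt0 DWK DWb q_small phase_small.
have given_init A : 1 - (~~ good_init e D0 A)%:R - n%:R * eps <=
    \sum_(ps : {ffun 'I_K -> {ffun 'I_n -> 'I_n}}) rounds_weight R e ps * (stable_by col A ps b)%:R.
  apply: (@le_trans _ _ (\sum_(ps : {ffun 'I_K -> {ffun 'I_n -> 'I_n}}) rounds_weight R e ps *
     (1 - (~~ good_init e D0 A)%:R - \sum_u (good_init e D0 A && phase_fails e D0 W A ps u)%:R))).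
    under eq_bigr do rewrite mulrBr mulrBr mulr1 mulr_sumr.
    rewrite !sumrB sum_rounds_weight -mulr_suml sum_rounds_weight mul1r exchange_big lerB //.
    apply: le_trans (_ : \sum_(u : 'I_n) eps <= _); last by rewrite sumr_const card_ord mulr_natl.
    by apply: ler_sum => u _; apply: prob_phase_fails.
  apply: ler_sum => ps _.
  have [->|weight_neq0] := eqVneq (rounds_weight R e ps) 0; first by rewrite !mul0r.
  by apply: ler_wpM2l; [exact: rounds_weight_ge0 | exact: stable_by_phases].
rewrite prob_conv_leE.
apply: le_trans (_ : \sum_A set_weight q A * (1 - (~~ good_init e D0 A)%:R - n%:R * eps) <= _).
  under eq_bigr do rewrite mulrBr mulrBr mulr1.
  rewrite !sumrB sum_set_weight -mulr_suml sum_set_weight mul1r.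
  rewrite mulnSr natrD natrM mulrDl opprD addrA lerD2r lerD2l lerN2 -mulrA.
  apply: le_trans (prob_not_good_init e q01 D0_gt0) _.
  by rewrite !ler_wpM2l.
by apply: ler_sum => A _; apply: ler_wpM2l; [exact: set_weight_ge0 | exact: given_init].
Qed.

Lemma prob_conv_le_ge0 (q : R) col b : 0 <= q <= 1 -> 0 <= prob_conv_le e q col K b.
Proof.
move=> q01; apply: sumr_ge0 => A _; rewrite mulr_ge0 ?set_weight_ge0 //.
by apply: sumr_ge0 => ps _; rewrite mulr_ge0 ?rounds_weight_ge0.
Qed.

End ConvergenceProb.

Section Schedule.
Variable R : realType.

Lemma expR1_le4 : expR (1 : R) <= 4.
Proof.
have half_pos : 0 < expR (2^-1 : R) := expR_gt0 _.
have half_le2 : expR (2^-1 : R) <= 2.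
  have := expR_ge1Dx (- (2^-1 : R)); rewrite expRN.
  have : (expR (2^-1 : R))^-1 * expR (2^-1) = 1 by rewrite mulVf // gt_eqF.
  set E := expR _; set y := E^-1; nra.
have -> : expR (1 : R) = expR (2^-1) ^+ 2 by rewrite -expRM_natl mulfV.
nra.
Qed.

Lemma ln_nat_ge1 (n : nat) : (4 <= n)%N -> 1 <= ln (n%:R : R).
Proof.
move=> n_ge4; rewrite -[X in X <= _](expRK 1) ler_ln ?posrE ?expR_gt0 ?ltr0n //.
  by apply: le_trans expR1_le4 _; rewrite ler_nat.
by apply: leq_trans n_ge4.
Qed.

Lemma expRN_le_inv_cube (n : nat) (a : R) : (0 < n)%N -> 3 * ln (n%:R : R) <= a ->
  expR (- a) <= (n%:R ^+ 3)^-1.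
Proof.
move=> n_gt0 a_ge; apply: le_trans (_ : expR (- (3%:R * ln (n%:R : R))) <= _).
  by rewrite ler_expR lerN2.
by rewrite expRN expRM_natl lnK ?posrE ?ltr0n.
Qed.

Lemma expr1B_le_expR (x : R) (m : nat) : x <= 1 -> (1 - x) ^+ m <= expR (- (x * m%:R)).
Proof.
move=> x_le1; rewrite mulrC -mulrN expRM_natl.
apply: lerXn2r; rewrite ?nnegrE ?subr_ge0 ?expR_ge0 //.
by have := expR_ge1Dx (- x); rewrite addrC.
Qed.

Lemma schedule_length_le (a D q l : R) :
  1 <= l -> 0 < q < 1 -> 0 <= a <= 3 * l + 1 -> 0 <= D <= a / q + 1 ->
  2 * D ^+ 2 * a <= 200 * l ^+ 3 / q ^+ 2.
Proof.
move=> l_ge1 /andP[q_gt0 q_lt1] /andP[a_ge0 a_le] /andP[D_ge0 D_le].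
have Dq_le : D * q <= 5 * l.
  have : D * q <= (a / q + 1) * q by rewrite ler_pM2r.
  by rewrite mulrDl divfK ?gt_eqF // mul1r; lra.
have Dq_ge0 : 0 <= D * q by rewrite mulr_ge0 // ltW.
have Dq2_le : (D * q) ^+ 2 <= (5 * l) ^+ 2 by rewrite lerXn2r // nnegrE; lra.
have : (D * q) ^+ 2 * a <= (5 * l) ^+ 2 * (4 * l) by apply: ler_pM; rewrite ?exprn_ge0 //; lra.
rewrite ler_pdivlMr ?exprn_gt0 //.
have -> : 2 * D ^+ 2 * a * q ^+ 2 = 2 * (D * q) ^+ 2 * a by rewrite exprMn; ring.
nra.
Qed.

(* a = floor(3 ln n) + 1, D0 = floor(a / q) + 1 and W = 2 D0 a. *)
Lemma schedule_exists (n : nat) (q : R) : (4 <= n)%N -> 0 < q < 1 ->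
  exists D0 W : nat, [/\ (0 < D0)%N,
    (D0 * W)%:R <= 200 * ln (n%:R : R) ^+ 3 / q ^+ 2,
    (1 - q) ^+ D0 <= (n%:R ^+ 3)^-1 &
    (1 - (2 * D0)%:R^-1) ^+ W <= (n%:R ^+ 3 : R)^-1].
Proof.
move=> n_ge4 q01; have /andP[q_gt0 q_lt1] := q01.
set l := ln (n%:R : R); have l_ge1 : 1 <= l by apply: ln_nat_ge1.
set a := (Num.truncn (3 * l)).+1.
have a_gt : 3 * l < a%:R by apply: truncnS_gt.
have a_le : a%:R <= 3 * l + 1 by rewrite /a -addn1 natrD lerD2r truncn_le; lra.
set D0 := (Num.truncn (a%:R / q)).+1.
have D0_gt : a%:R / q < D0%:R by apply: truncnS_gt.
have D0_le : D0%:R <= a%:R / q + 1.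
  by rewrite /D0 -addn1 natrD lerD2r truncn_le divr_ge0 // ltW.
have expNa_le : expR (- a%:R : R) <= (n%:R ^+ 3)^-1.
  by apply: expRN_le_inv_cube (ltW a_gt); apply: leq_trans n_ge4.
exists D0, (2 * D0 * a)%N; split => //.
- rewrite (_ : _%:R = 2 * D0%:R ^+ 2 * a%:R); last by rewrite !natrM; ring.
  by apply: schedule_length_le; rewrite // ler0n ?a_le ?D0_le.
- apply: le_trans (expr1B_le_expR _ (ltW q_lt1)) (le_trans _ expNa_le).
  by rewrite ler_expR lerN2 mulrC ltW // -ltr_pdivrMr.
- apply: le_trans (expr1B_le_expR _ _) (le_trans _ expNa_le).
    by rewrite invf_le1 ?ler1n ?ltr0n.
  by rewrite ler_expR lerN2 (natrM _ (2 * D0) a) mulKf ?pnatr_eq0.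
Qed.

Lemma union_bound_le (n : nat) : (4 <= n)%N ->
  (n * n.+2)%:R * (n%:R ^+ 3)^-1 <= 4 / n.+1%:R :> R.
Proof.
move=> n_ge4; rewrite natrM -(natr1 n.+1) -(natr1 n).
have : (4 : R) <= n%:R by rewrite ler_nat.
set N := (n%:R : R) => N_ge4.
rewrite ler_pdivlMr; last lra.
rewrite mulrAC ler_pdivrMr; last by rewrite exprn_gt0 //; lra.
nra.
Qed.

End Schedule.

Local Open Scope classical_set_scope.
Local Open Scope ring_scope.

Theorem theorem3p6 (R : realType) :
  exists (C : R) (delta : nat -> R),
    0 < C /\ delta @ \oo --> 0 /\
    forall (n : nat) (e : rel 'I_n), irreflexive e ->
    forall (q : R), 0 < q < 1 ->
    forall (col : {set 'I_n} -> 'I_n -> bool) (K : nat),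
      C * ln (n%:R) ^+ 3 / q ^+ 2 <= K%:R ->
      1 - delta n <= prob_conv_le e q col K (C * ln (n%:R) ^+ 3 / q ^+ 2).
Proof.
exists 200, (fun n : nat => 4 / n.+1%:R); split => //; split.
  by rewrite -(mulr0 4); apply: cvgMl_tmp; exact: cvg_harmonic.
move=> n e _ q q01 col K T_le_K.
have q01' : 0 <= q <= 1 by case/andP: q01 => *; rewrite !ltW.
have [n_lt4|n_ge4] := ltnP n 4.
  apply: le_trans (prob_conv_le_ge0 e K col _ q01').
  by rewrite subr_le0 ler_pdivlMr ?ltr0n // mul1r ler_nat.
have [D0 [W [D0_gt0 DW_le q_small phase_small]]] := schedule_exists n_ge4 q01.
have DWK : (D0 * W <= K)%N by rewrite -(ler_nat R); apply: le_trans DW_le T_le_K.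
apply: le_trans (prob_conv_le_ge e col q01' D0_gt0 DWK DW_le q_small phase_small).
by rewrite lerB // union_bound_le.
Qed.
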